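(* Let $E_a\subseteq E$ be a set of directed links without self-loops, with maximum out-degree $D_a^+$ and maximum in-degree $D_a^-$ in $G_a=(V,E_a)$, and let $D$ be the maximum number of neighbors (excluding itself) of any node in the base topology $G$. Then the maximum degree $D_c$ of the conflict graph of $E_a$ satisfies $$D_c\le(D+1)\big(D_a^++D_a^-\big).$$
   Context: $G=(V,E)$ is a bidirected directed base topology on $V=\{1,\dots,n\}$ (with self-loops, which are not counted as neighbors). Communication model: two distinct directed links $(i,j),(k,l)$ (with $i\ne j$, $k\ne l$) can be scheduled in the same transmission slot iff (a) $i\ne l$ and $j\ne k$ (half-duplex), and (b) if $i\ne k$ then $(i,l)\notin E$ and $(k,j)\notin E$ (interference); otherwise they conflict. The conflict graph of $E_a$ is the undirected graph with vertex set $E_a$ and an edge between every conflicting pair; $D_c$ is its maximum vertex degree. In-/out-degrees in $G_a$ are $d_a^-(j)=|\{i:(i,j)\in E_a\}|$, $d_a^+(j)=|\{i:(j,i)\in E_a\}|$, with maxima $D_a^-,D_a^+$. *)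

From mathcomp Require Import all_boot all_order.
Set Implicit Arguments. Unset Strict Implicit. Unset Printing Implicit Defensive.

Section Defs.
Variable n : nat.
Notation V := 'I_n.
Notation link := (V * V)%type.

(* Compatibility of two links (i,j),(k,l) in the base topology E
   (half-duplex + interference conditions). *)
Definition compatible (E : rel V) (e f : link) : bool :=
  let: (i, j) := e in let: (k, l) := f in
  [&& i != l, j != k & (i != k) ==> (~~ E i l && ~~ E k j)].

Definition conflict (E : rel V) (e f : link) : bool := ~~ compatible E e f.

Definition conflict_deg (E : rel V) (Ea : {set link}) (e : link) : nat :=
  #|[set f in Ea | (f != e) && (conflict E e f || conflict E f e)]|.

Definition Dc (E : rel V) (Ea : {set link}) : nat :=
  \max_(e in Ea) conflict_deg E Ea e.

Definition in_deg (Ea : {set link}) (j : V) : nat := #|[set i | (i, j) \in Ea]|.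
Definition out_deg (Ea : {set link}) (j : V) : nat := #|[set i | (j, i) \in Ea]|.
Definition Da_in (Ea : {set link}) : nat := \max_(j : V) in_deg Ea j.
Definition Da_out (Ea : {set link}) : nat := \max_(j : V) out_deg Ea j.

Definition nbr_count (E : rel V) (i : V) : nat := #|[set j | (j != i) && E i j]|.
Definition Dmax (E : rel V) : nat := \max_(i : V) nbr_count E i.
End Defs.

From mathcomp Require Import all_boot all_order.

(* Two conflicting links always have the tail of one adjacent (or equal) to
   the head of the other, so the conflict neighbours of a link (i, j) are links
   leaving a neighbour of j or entering a neighbour of i. Each closed
   neighbourhood has at most D + 1 nodes, each emitting at most D_a^+ and
   receiving at most D_a^- links of E_a. *)

Lemma leq_card_bigcup (T I : finType) (P : pred I) (S : I -> {set T}) :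
  #|\bigcup_(i | P i) S i| <= \sum_(i | P i) #|S i|.
Proof.
elim/big_ind2: _ => [|a A b B leAa leBb|//]; first by rewrite cards0.
by apply: leq_trans (leq_card_setU A B) _; rewrite leq_add.
Qed.

Section Degrees.
Variable n : nat.
Implicit Types (E : rel 'I_n) (Ea : {set 'I_n * 'I_n}) (N : {set 'I_n}).

Lemma card_links_into Ea N :
  #|[set f in Ea | f.2 \in N]| <= #|N| * Da_in Ea.
Proof.
have sub : [set f in Ea | f.2 \in N] \subset
    \bigcup_(l in N) [set (k, l) | k in [set k | (k, l) \in Ea]].
  apply/subsetP => -[k l]; rewrite inE /= => /andP [kl_Ea lN].
  by apply/bigcupP; exists l => //; apply/imsetP; exists k; rewrite ?inE.
rewrite -sum_nat_const; apply: leq_trans (subset_leq_card sub) _.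
apply: leq_trans (leq_card_bigcup _ _ _ _) _; apply: leq_sum => l _.
exact: leq_trans (leq_imset_card _ _) (leq_bigmax (F := in_deg Ea) l).
Qed.

Lemma card_links_from Ea N :
  #|[set f in Ea | f.1 \in N]| <= #|N| * Da_out Ea.
Proof.
have sub : [set f in Ea | f.1 \in N] \subset
    \bigcup_(k in N) [set (k, l) | l in [set l | (k, l) \in Ea]].
  apply/subsetP => -[k l]; rewrite inE /= => /andP [kl_Ea kN].
  by apply/bigcupP; exists k => //; apply/imsetP; exists l; rewrite ?inE.
rewrite -sum_nat_const; apply: leq_trans (subset_leq_card sub) _.
apply: leq_trans (leq_card_bigcup _ _ _ _) _; apply: leq_sum => k _.
exact: leq_trans (leq_imset_card _ _) (leq_bigmax (F := out_deg Ea) k).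
Qed.

Lemma card_closed_nbhd E i : #|[set j | E i j]| <= Dmax E + 1.
Proof.
have sub : [set j | E i j] \subset i |: [set j | (j != i) && E i j].
  by apply/subsetP => j; rewrite !inE; case: eqVneq.
apply: leq_trans (subset_leq_card sub) _; rewrite cardsU1 addnC.
by rewrite leq_add ?leq_b1 // (leq_bigmax (F := nbr_count E) i).
Qed.

Lemma conflict_adjacent E (e f : 'I_n * 'I_n) : reflexive E ->
  conflict E e f || conflict E f e -> E f.1 e.2 || E e.1 f.2.
Proof.
case: e f => [i j] [k l] E_refl; rewrite /conflict /compatible /=.
case: (eqVneq i l) => [->|_]; first by rewrite E_refl orbT.
case: (eqVneq j k) => [->|_]; first by rewrite E_refl.
by case: (eqVneq i k) => [<-|_] //=; case: (E i l); case: (E k j).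
Qed.

End Degrees.

Theorem lemma4 (n : nat) (E : rel 'I_n) (Ea : {set 'I_n * 'I_n}) :
  symmetric E ->
  reflexive E ->
  (forall e, e \in Ea -> E e.1 e.2) ->
  (forall e, e \in Ea -> e.1 != e.2) ->
  Dc E Ea <= (Dmax E + 1) * (Da_out Ea + Da_in Ea).
Proof.
(* The bound does not need the links of Ea to be loop-free edges of E. *)
move=> E_sym E_refl _ _; apply/bigmax_leqP => -[i j] _.
have sub : [set f in Ea | (f != (i, j)) &&
             (conflict E (i, j) f || conflict E f (i, j))] \subset
    [set f in Ea | f.1 \in [set k | E j k]] :|:
    [set f in Ea | f.2 \in [set l | E i l]].
  apply/subsetP => f; rewrite !inE => /andP [-> /andP [_ /conflict_adjacent]].
  by rewrite E_sym; apply.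
apply: leq_trans (subset_leq_card sub) _.
apply: leq_trans (leq_card_setU _ _) _; rewrite mulnDr leq_add //.
  apply: leq_trans (card_links_from _ Ea _) _.
  exact: leq_mul (card_closed_nbhd _ E j) (leqnn _).
apply: leq_trans (card_links_into _ Ea _) _.
exact: leq_mul (card_closed_nbhd _ E i) (leqnn _).
Qed.
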